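(* Let $(\Omega,\mathcal{F})$ be a measurable space and $\mu$ a continuous capacity on $\mathcal{F}$. Let $\{Y_n\}_{n\in\mathbb{N}}$ be real-valued random variables on $(\Omega,\mathcal{F})$ such that for every $n\in\mathbb{N}$ the $\sigma$-algebras $\sigma(Y_k,\ k\le n)$ and $\sigma(Y_k,\ k\ge n+1)$ are independent with respect to $\mu$. Let $\mathcal{T}=\bigcap_{n=1}^{\infty}\sigma(Y_k,\ k\ge n)$ be the tail $\sigma$-algebra. Then for every $A\in\mathcal{T}$: (i) $\mu(A)=0$ or $\mu(A)=1$; and (ii) $\mu(A)=0$ or $\mu(A^c)=0$.
   Context: A capacity on $\mathcal{F}$ is a set function $\mu:\mathcal{F}\to[0,1]$ with $\mu(\emptyset)=0$, $\mu(\Omega)=1$ and $\mu(A)\le\mu(B)$ whenever $A\subseteq B$. It is continuous from below if $\mu(A_n)\to\mu(A)$ whenever $A_n\uparrow A$, continuous from above if $\mu(A_n)\to\mu(A)$ whenever $A_n\downarrow A$, and continuous if both hold. Two subclasses $\mathcal{D}_1,\mathcal{D}_2\subseteq\mathcal{F}$ are independent with respect to $\mu$ if $\mu(A_1\cap A_2)=\mu(A_1)\mu(A_2)$ for all $A_1\in\mathcal{D}_1$, $A_2\in\mathcal{D}_2$. *)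

From HB Require Import structures.
From mathcomp Require Import all_boot all_order all_algebra.
From mathcomp Require Import all_classical all_reals all_analysis.
Set Implicit Arguments. Unset Strict Implicit. Unset Printing Implicit Defensive.
Import Order.TTheory GRing.Theory Num.Theory.
Import numFieldNormedType.Exports.
Local Open Scope classical_set_scope.
Local Open Scope ring_scope.

Definition capacity (d : measure_display) (T : measurableType d) (R : realType)
  (mu : set T -> R) : Prop :=
  [/\ mu set0 = 0, mu setT = 1,
      (forall A, measurable A -> 0 <= mu A <= 1) &
      (forall A B, measurable A -> measurable B -> A `<=` B -> mu A <= mu B)].

Definition cont_from_below (d : measure_display) (T : measurableType d) (R : realType)
  (mu : set T -> R) : Prop :=
  forall (A : nat -> set T), (forall n, measurable (A n)) ->
    (forall n, A n `<=` A n.+1) ->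
    (mu \o A) @ \oo --> mu (\bigcup_n A n).

Definition cont_from_above (d : measure_display) (T : measurableType d) (R : realType)
  (mu : set T -> R) : Prop :=
  forall (A : nat -> set T), (forall n, measurable (A n)) ->
    (forall n, A n.+1 `<=` A n) ->
    (mu \o A) @ \oo --> mu (\bigcap_n A n).

Definition continuous_capacity (d : measure_display) (T : measurableType d) (R : realType)
  (mu : set T -> R) : Prop :=
  [/\ capacity mu, cont_from_below mu & cont_from_above mu].

Definition indep_classes (T : Type) (R : realType) (mu : set T -> R)
  (D1 D2 : set (set T)) : Prop :=
  forall A1 A2, D1 A1 -> D2 A2 -> mu (A1 `&` A2) = mu A1 * mu A2.

Definition sigma_gen (T : Type) (R : realType) (Y : nat -> T -> R)
  (P : nat -> Prop) : set (set T) :=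
  <<s [set Y k @^-1` B | k in P & B in (@measurable _ R)] >>.

Definition tail_sigma (T : Type) (R : realType) (Y : nat -> T -> R) : set (set T) :=
  \bigcap_(n in [set n : nat | (1 <= n)%N]) sigma_gen Y (fun k => (n <= k)%N).

From HB Require Import structures.
From mathcomp Require Import all_boot all_order all_algebra.
From mathcomp Require Import all_classical all_reals all_analysis.
Set Implicit Arguments. Unset Strict Implicit. Unset Printing Implicit Defensive.
Import Order.TTheory GRing.Theory Num.Theory.
Import numFieldNormedType.Exports.
Local Open Scope classical_set_scope.
Local Open Scope ring_scope.

(** A tail event A is independent of every event determined by finitely many
    Y_k.  By continuity of mu from below and from above, the events B with
    mu (B `&` A) = mu B * mu A form a monotone class; it contains the ring of
    such finite-horizon events, hence the generated sigma-ring, which contains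
    A and ~` A.  So mu A = mu A ^ 2 and 0 = mu set0 = mu (~` A) * mu A. *)

Lemma sigma_algebra_setring (T : pointedType) (G : set (set T)) :
  sigma_algebra setT G -> setring G.
Proof.
move=> /measurable_g_measurableTypeE <-.
by split=> [|A B|A B];
  [exact: measurable0 | exact: measurableU | exact: measurableD].
Qed.

Lemma bigcup_nondecreasing_setring (T : Type) (G : nat -> set (set T)) :
  (forall n, setring (G n)) -> (forall n m, (n <= m)%N -> G n `<=` G m) ->
  setring (\bigcup_n G n).
Proof.
move=> ringG homoG.
have common A B : (\bigcup_n G n) A -> (\bigcup_n G n) B ->
    exists k, G k A /\ G k B.
  move=> [n _ An] [m _ Bm]; exists (maxn n m).
  by split; [apply: homoG An; exact: leq_maxl | apply: homoG Bm; exact: leq_maxr].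
split=> [|A B GA GB|A B GA GB]; first by exists 0%N => //; case: (ringG 0%N).
- have [k [Ak Bk]] := common A B GA GB.
  by exists k => //; case: (ringG k) => _ GU _; exact: GU.
- have [k [Ak Bk]] := common A B GA GB.
  by exists k => //; case: (ringG k) => _ _ GD; exact: GD.
Qed.

Lemma g_sigma_ring_sigma_algebra (T : Type) (G : set (set T)) :
  G setT -> sigma_algebra setT <<sr G >>.
Proof.
move=> GT; have [G0 GD GU] := smallest_sigma_ring G.
by split=> // A GA; apply: GD => //; exact: sub_g_sigma_ring.
Qed.

Lemma indep_cvg (T : Type) (R : realType) (mu : set T -> R)
    (F : nat -> set T) (A L : set T) :
  (forall n, mu (F n `&` A) = mu (F n) * mu A) ->
  mu \o F @ \oo --> mu L ->
  (fun n => mu (F n `&` A)) @ \oo --> mu (L `&` A) ->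
  mu (L `&` A) = mu L * mu A.
Proof.
move=> indF cvgF cvgFA.
have cvgFA' : (fun n => mu (F n `&` A)) @ \oo --> mu L * mu A.
  by rewrite (funext indF); exact: cvgMr_tmp.
exact: cvg_unique cvgFA cvgFA'.
Qed.

Section capacity_independence.
Context d (T : measurableType d) (R : realType) (mu : set T -> R).
Hypotheses (mu_below : cont_from_below mu) (mu_above : cont_from_above mu).

Lemma monotone_indep (A : set T) : measurable A ->
  monotone [set B | measurable B /\ mu (B `&` A) = mu B * mu A].
Proof.
move=> mA; split=> F homoF FA; have [mF indF] := all_and2 FA.
- have ndF n : F n `<=` F n.+1 by apply/subsetPset/homoF.
  split; first exact: bigcup_measurable.
  apply: indep_cvg indF (mu_below mF ndF) _.
  rewrite setI_bigcupl; apply: mu_below => n; first exact: measurableI.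
  exact: setSI.
- have niF n : F n.+1 `<=` F n by apply/subsetPset/homoF.
  split; first by apply: bigcap_measurable => //; exists 0%N.
  apply: indep_cvg indF (mu_above mF niF) _.
  rewrite -bigcapIl; last by exists 0%N.
  apply: mu_above => n; first exact: measurableI.
  exact: setSI.
Qed.

Lemma indep_g_sigma_ring (A : set T) (G : set (set T)) :
  measurable A -> setring G -> G `<=` measurable ->
  indep_classes mu G [set A] -> indep_classes mu <<sr G >> [set A].
Proof.
move=> mA ringG Gm indG B _ GB ->.
apply: (monotone_setring_sub_g_sigma_ring (monotone_indep mA) ringG _ GB).2.
by move=> C GC; split; [exact: Gm | exact: indG].
Qed.

End capacity_independence.

Lemma self_indep_zero_one (T : Type) (R : idomainType) (mu : set T -> R)
    (A : set T) :
  mu set0 = 0 ->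
  mu (A `&` A) = mu A * mu A -> mu (~` A `&` A) = mu (~` A) * mu A ->
  (mu A = 0 \/ mu A = 1) /\ (mu A = 0 \/ mu (~` A) = 0).
Proof.
rewrite setIid setICl => -> idemA /esym/eqP.
have /eqP : mu A * (1 - mu A) = 0 by rewrite mulrBr mulr1 -idemA subrr.
rewrite !mulf_eq0 subr_eq0 => /orP[/eqP muA0 | /eqP/esym muA1].
  by split; left.
by rewrite muA1 oner_eq0 orbF => /eqP; split; right.
Qed.

Definition finite_horizon (T : Type) (R : realType) (Y : nat -> T -> R) :
  set (set T) := \bigcup_n sigma_gen Y (fun k => (k <= n)%N).

Section finite_horizon_events.
Context d (T : measurableType d) (R : realType) (Y : nat -> T -> R).

Lemma sigma_gen_measurable (P : nat -> Prop) :
  (forall k, measurable_fun setT (Y k)) -> sigma_gen Y P `<=` measurable.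
Proof.
move=> mY; apply: smallest_sub; first exact: sigma_algebra_measurable.
by move=> _ [k _ [B mB <-]]; rewrite -[_ @^-1` _]setTI; exact: mY.
Qed.

Lemma sigma_gen_mono (P Q : nat -> Prop) :
  P `<=` Q -> sigma_gen Y P `<=` sigma_gen Y Q.
Proof.
move=> PQ; apply: sub_sigma_algebra2 => _ [k Pk [B mB <-]].
by exists k; [exact: PQ | exists B].
Qed.

Lemma setring_finite_horizon : setring (finite_horizon Y).
Proof.
apply: bigcup_nondecreasing_setring => [n|n m nm].
  exact/sigma_algebra_setring/smallest_sigma_algebra.
by apply: sigma_gen_mono => k /= kn; exact: leq_trans nm.
Qed.

Lemma finite_horizon_measurable :
  (forall k, measurable_fun setT (Y k)) -> finite_horizon Y `<=` measurable.
Proof. by move=> mY B [n _]; exact: sigma_gen_measurable. Qed.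

Lemma sigma_gen_sub_finite_horizon (P : nat -> Prop) :
  sigma_gen Y P `<=` <<sr finite_horizon Y >>.
Proof.
apply: smallest_sub.
  apply: g_sigma_ring_sigma_algebra; exists 0%N => //.
  by rewrite -setC0 -setTD; apply: sigma_algebraCD; exact: sigma_algebra0.
move=> _ [k Pk [B mB <-]]; apply: sub_g_sigma_ring; exists k => //.
by apply: sub_sigma_algebra; exists k => //; exists B.
Qed.

End finite_horizon_events.

Theorem theorem1 (d : measure_display) (T : measurableType d) (R : realType)
  (mu : set T -> R) (Y : nat -> T -> R) :
  continuous_capacity mu ->
  (forall n, measurable_fun setT (Y n)) ->
  (forall n, indep_classes mu (sigma_gen Y (fun k => (k <= n)%N))
                              (sigma_gen Y (fun k => (n.+1 <= k)%N))) ->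
  forall A, tail_sigma Y A ->
    (mu A = 0 \/ mu A = 1) /\ (mu A = 0 \/ mu (~` A) = 0).
Proof.
move=> [[mu0 _ _ _] mu_below mu_above] mY indY A tailA.
have futureA n : sigma_gen Y (fun k => (n.+1 <= k)%N) A by exact: tailA.
have mA : measurable A by exact: sigma_gen_measurable (futureA 0%N).
have indA : indep_classes mu (finite_horizon Y) [set A].
  by move=> B _ [n _ Bn] ->; exact: indY Bn (futureA n).
have {}indA := indep_g_sigma_ring mu_below mu_above mA
  (setring_finite_horizon Y) (finite_horizon_measurable mY) indA.
have A_sr := sigma_gen_sub_finite_horizon (futureA 0%N).
have Ac_sr := sigma_gen_sub_finite_horizon (sigma_algebraC (futureA 0%N)).
apply: self_indep_zero_one mu0 _ _.
  exact: indA A_sr erefl.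
exact: indA Ac_sr erefl.
Qed.
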